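(* Let $G=(V,E)$ be a simple undirected graph with $m=|E|$, $b:V\to\mathbb{Z}_{\ge0}$ with $\beta=\max_v b(v)$, and $f:2^E\to\mathbb{R}_{\ge0}$ a normalized monotone submodular function satisfying the local dependence assumption. Then the Lazy Greedy algorithm for submodular $b$-matching runs in $O(\beta\, m\log m)$ time.
   Context: A $b$-matching is $M\subseteq E$ with $|M\cap\delta(v)|\le b(v)$ for all $v$ ($\delta(v)$ = edges incident to $v$); $v$ is saturated if equality holds; an edge is available w.r.t. $M$ if it is not in $M$ and both its endpoints are unsaturated. Marginal gain: $\rho_e(A)=f(A\cup\{e\})-f(A)$. Local dependence assumption: the marginal gain $\rho_e(A)$ of an edge $e$ depends only on the edges of $A$ adjacent to $e$ (sharing an endpoint with $e$). Lazy Greedy algorithm: start with $M=\emptyset$ and a max-heap containing all edges, each keyed by $f(\{e\})$. While the heap is nonempty: pop the top edge $e$ and recompute its marginal gain $\rho_e(M)$; if $e$ is available, then if $\rho_e(M)$ is at least the key of the current heap top (or the heap is empty) add $e$ to $M$, otherwise push $e$ back with key $\rho_e(M)$; unavailable popped edges are discarded. Running time counts each marginal gain evaluation and availability check as constant time. *)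

From mathcomp Require Import all_boot all_order all_algebra.
Set Implicit Arguments. Unset Strict Implicit. Unset Printing Implicit Defensive.
Import Order.TTheory GRing.Theory Num.Theory.
Local Open Scope ring_scope.

Section LazyGreedy.
Variables (T : finType) (R : realFieldType).
Variables (E : {set {set T}}) (b : T -> nat) (f : {set {set T}} -> R).

Definition simple_graph : Prop := forall e, e \in E -> #|e| = 2%N.

Definition delta (v : T) : {set {set T}} := [set e in E | v \in e].

Definition saturated (M : {set {set T}}) (v : T) : bool :=
  #|M :&: delta v| == b v.

Definition available (M : {set {set T}}) (e : {set T}) : bool :=
  (e \notin M) && [forall v in e, ~~ saturated M v].

Definition rho (e : {set T}) (A : {set {set T}}) : R := f (e |: A) - f A.

Definition adjacent_edges (e : {set T}) : {set {set T}} :=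
  [set e' in E | e' :&: e != set0].

Definition normalized : Prop := f set0 = 0.
Definition nonnegative : Prop := forall A : {set {set T}}, A \subset E -> 0 <= f A.
Definition monotone : Prop :=
  forall A B : {set {set T}}, A \subset B -> B \subset E -> f A <= f B.
Definition submodular : Prop :=
  forall A B : {set {set T}}, A \subset E -> B \subset E -> f (A :|: B) + f (A :&: B) <= f A + f B.
Definition local_dependence : Prop :=
  forall (e : {set T}) (A B : {set {set T}}), e \in E -> A \subset E -> B \subset E ->
    A :&: adjacent_edges e = B :&: adjacent_edges e -> rho e A = rho e B.

(* State of Lazy Greedy: current matching M and the heap, modelled as a
   multiset (sequence) of (edge, key) pairs.  Popping returns some entry
   of maximum key (ties resolved arbitrarily: the step is a relation). *)
Definition state := ({set {set T}} * seq ({set T} * R))%type.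

Definition init_state : state := (set0, [seq (e, f [set e]) | e <- enum E]).

Definition step (s s' : state) : Prop :=
  let (M, H) := s in
  exists e k, [/\ (e, k) \in H, (forall p, p \in H -> p.2 <= k) &
    let H' := rem (e, k) H in
    let g := rho e M in
    s' = if available M e then
           (if all (fun p => p.2 <= g) H' (* heap empty or g >= key of top *)
            then (e |: M, H') else (M, (e, g) :: H'))
         else (M, H')].

(* Cost of one iteration started with heap H: one pop and at most one push
   (each O(log |H|) on a binary heap, |H| being the heap size), plus a
   constant number of marginal-gain evaluations / availability checks /
   top-of-heap inspections (each counted as constant time). *)
Definition iter_cost (s : state) : nat := 3 + 2 * trunc_log 2 (size s.2).

Fixpoint run (s : state) (ss : seq state) : Prop :=
  match ss with
  | [::] => True
  | s' :: ss' => step s s' /\ run s' ss'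
  end.

Fixpoint run_cost (s : state) (ss : seq state) : nat :=
  match ss with
  | [::] => 0%N
  | s' :: ss' => (iter_cost s + run_cost s' ss')%N
  end.

End LazyGreedy.

From mathcomp Require Import all_boot all_order all_algebra.
From mathcomp Require Import zify.
Import Order.TTheory GRing.Theory Num.Theory.
Set Implicit Arguments. Unset Strict Implicit. Unset Printing Implicit Defensive.

(* Give a heap entry (e, k) the weight
   1 + [k <> rho_e(M)] + (2 beta - #(edges of M adjacent to e)).
   Every iteration lowers the total weight: discarding an entry removes it,
   pushing e back replaces a stale key by the current gain, and adding e to M
   raises the adjacency count of each entry adjacent to e, which pays for its
   key possibly becoming stale, while by local dependence the keys of the
   other entries keep their status.  The heap never grows, so there are at
   most (2 beta + 2) m iterations, each of cost O(log m). *)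

Lemma setU1I_mem (U : finType) (x : U) (A B : {set U}) :
  x \in B -> (x |: A) :&: B = x |: (A :&: B).
Proof. by move=> xB; apply/setP=> y; rewrite !inE; case: eqP => [->|_]. Qed.

Lemma setU1I_notin (U : finType) (x : U) (A B : {set U}) :
  x \notin B -> (x |: A) :&: B = A :&: B.
Proof.
by move=> xB; apply/setP=> y; rewrite !inE; case: eqP => [->|_]; rewrite ?(negbTE xB) ?andbF.
Qed.

Section BMatching.
Variables (T : finType) (E : {set {set T}}) (b : T -> nat).

Definition b_matching (M : {set {set T}}) : Prop :=
  M \subset E /\ forall v, (#|M :&: delta E v| <= b v)%N.

Lemma b_matching0 : b_matching set0.
Proof. by split=> [|v]; rewrite ?sub0set ?set0I ?cards0. Qed.

Lemma b_matching_add (M : {set {set T}}) (e : {set T}) :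
  b_matching M -> e \in E -> available E b M e -> b_matching (e |: M).
Proof.
move=> [ME Mb] eE /andP[_ /forallP unsat]; split=> [|v].
  by rewrite subUset sub1set eE.
rewrite setIUl; have [ve | ve] := boolP (v \in e).
  have Mv : (#|M :&: delta E v| < b v)%N.
    by rewrite ltn_neqAle Mb andbT; move: (unsat v); rewrite ve.
  apply: leq_trans (leq_card_setU _ _).1 (leq_trans _ Mv).
  by rewrite -add1n leq_add2r -(cards1 e) subset_leq_card ?subsetIl.
have -> : [set e] :&: delta E v = set0.
  by apply/setP=> x; rewrite !inE; case: eqP => // ->; rewrite (negbTE ve) andbF.
by rewrite set0U.
Qed.

Lemma adjacent_edges_pair (u v : T) :
  adjacent_edges E [set u; v] = delta E u :|: delta E v.
Proof.
apply/setP=> x; rewrite !inE -andb_orr; congr (_ && _).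
apply/set0Pn/orP => [[w] | [xu | xv]].
- by rewrite !inE => /andP[xw /orP[] /eqP <-]; [left | right].
- by exists u; rewrite !inE xu eqxx.
- by exists v; rewrite !inE xv eqxx orbT.
Qed.

End BMatching.

Section Potential.
Variables (T : finType) (R : realFieldType) (E : {set {set T}}) (b : T -> nat)
  (f : {set {set T}} -> R) (beta : nat).
Hypothesis simple : simple_graph E.
Hypothesis local : local_dependence E f.
Hypothesis b_le_beta : forall v, (b v <= beta)%N.

Definition adjacent_count (e : {set T}) (M : {set {set T}}) : nat :=
  #|M :&: adjacent_edges E e|.

Lemma adjacent_count_le (M : {set {set T}}) (e : {set T}) :
  b_matching E b M -> e \in E -> (adjacent_count e M <= 2 * beta)%N.
Proof.
move=> [_ Mb] /simple/eqP/cards2P[u [v [_ ->]]].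
rewrite /adjacent_count adjacent_edges_pair setIUr mul2n -addnn.
apply: leq_trans (leq_card_setU _ _).1 _.
by rewrite leq_add // (leq_trans (Mb _)).
Qed.

Lemma adjacent_count_add (M : {set {set T}}) (e e' : {set T}) : e \notin M ->
  adjacent_count e' (e |: M) = ((e \in adjacent_edges E e') + adjacent_count e' M)%N.
Proof.
move=> eM; rewrite /adjacent_count; have [adj | nadj] := boolP (e \in _).
  by rewrite setU1I_mem // cardsU1 inE (negbTE eM).
by rewrite setU1I_notin.
Qed.

Definition entry_potential (M : {set {set T}}) (p : {set T} * R) : nat :=
  (1 + (p.2 != rho f p.1 M) + (2 * beta - adjacent_count p.1 M))%N.

Definition potential (M : {set {set T}}) (H : seq ({set T} * R)) : nat :=
  (\sum_(p <- H) entry_potential M p)%N.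

Lemma potential_rem (M : {set {set T}}) (H : seq ({set T} * R)) p : p \in H ->
  potential M H = (entry_potential M p + potential M (rem p H))%N.
Proof. by move=> pH; rewrite /potential (perm_big _ (perm_to_rem pH)) big_cons. Qed.

Lemma entry_potential_add (M : {set {set T}}) (e : {set T}) (p : {set T} * R) :
  b_matching E b (e |: M) -> e \notin M -> p.1 \in E ->
  (entry_potential (e |: M) p <= entry_potential M p)%N.
Proof.
move=> eMb eM pE; have eME := eMb.1; have ME := subset_trans (subsetUr [set e] M) eME.
have [adj | nadj] := boolP (e \in adjacent_edges E p.1).
  have := adjacent_count_le eMb pE; have := leq_b1 (p.2 != rho f p.1 (e |: M)).
  rewrite /entry_potential adjacent_count_add // adj; lia.
have same := setU1I_notin M nadj.
by rewrite /entry_potential /adjacent_count same (local pE eME ME same).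
Qed.

Lemma potential_add (M : {set {set T}}) (e : {set T}) (H : seq ({set T} * R)) :
  b_matching E b (e |: M) -> e \notin M -> (forall p, p \in H -> p.1 \in E) ->
  (potential (e |: M) H <= potential M H)%N.
Proof.
move=> eMb eM HE; rewrite /potential !big_seq.
by apply: leq_sum => p pH; apply: entry_potential_add => //; apply: HE.
Qed.

Definition lazy_invariant (s : state T R) : Prop :=
  b_matching E b s.1 /\ forall p, p \in s.2 -> p.1 \in E.

Lemma step_potential (s s' : state T R) : lazy_invariant s -> step E b f s s' ->
  [/\ lazy_invariant s', (potential s'.1 s'.2 < potential s.1 s.2)%N
    & (size s'.2 <= size s.2)%N].
Proof.
case: s => M H [/= Mb HE] [e [k [ekH kmax ->]]].
set H' := rem (e, k) H.
have H'E p : p \in H' -> p.1 \in E by move/mem_rem; apply: HE.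
have eE : e \in E := HE _ ekH.
have size_H' : size H' = (size H).-1 by rewrite size_rem.
have pot_H := potential_rem M ekH; rewrite -/H' in pot_H.
have pot_H'_lt : (potential M H' < potential M H)%N.
  by rewrite pot_H -[X in (X < _)%N]add0n ltn_add2r.
have [avail | _] /= := ifP; last by rewrite size_H' leq_pred.
have [keep | push] /= := ifP.
  have eMb := b_matching_add Mb eE avail; have eM := (andP avail).1.
  split=> //; last by rewrite size_H' leq_pred.
  exact: leq_ltn_trans (potential_add eMb eM H'E) pot_H'_lt.
split; last by rewrite size_H' prednK //; case: (H) ekH.
- by split=> // p; rewrite inE => /predU1P[-> | /H'E].
- move/negbT/allPn: push => [p pH']; rewrite -ltNge => lt_gain.
  have stale : (rho f e M < k)%R := lt_le_trans lt_gain (kmax p (mem_rem pH')).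
  by rewrite pot_H /potential big_cons ltn_add2r /entry_potential /= eqxx (gt_eqF stale).
Qed.

Lemma run_length_le (s : state T R) (ss : seq (state T R)) :
  lazy_invariant s -> run E b f s ss -> (size ss <= potential s.1 s.2)%N.
Proof.
elim: ss s => [|s' ss IH] s //= inv_s [st rn].
have [inv_s' lt_s _] := step_potential inv_s st.
exact: leq_ltn_trans (IH _ inv_s' rn) lt_s.
Qed.

Lemma run_cost_le (s : state T R) (ss : seq (state T R)) (N : nat) :
  lazy_invariant s -> (size s.2 <= N)%N -> run E b f s ss ->
  (run_cost s ss <= size ss * (3 + 2 * trunc_log 2 N))%N.
Proof.
elim: ss s => [|s' ss IH] s //= inv_s sizeN [st rn].
have [inv_s' _ size_s'] := step_potential inv_s st.
rewrite mulSn leq_add ?(IH _ inv_s' (leq_trans size_s' sizeN) rn) //.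
by rewrite /iter_cost leq_add2l leq_mul2l leq_trunc_log ?orbT.
Qed.

Lemma init_invariant : lazy_invariant (init_state E f).
Proof. by split=> [|p /mapP[e]]; [exact: b_matching0 | rewrite mem_enum => eE ->]. Qed.

Lemma init_potential_le :
  (potential (init_state E f).1 (init_state E f).2 <= #|E| * (2 * beta + 2))%N.
Proof.
rewrite /potential big_map big_enum -sum_nat_const leq_sum // => e _.
by have := leq_b1 (f [set e] != rho f e set0); rewrite /entry_potential /=; lia.
Qed.

End Potential.

Theorem lemma1 : exists C : nat,
  forall (T : finType) (R : realFieldType) (E : {set {set T}})
         (b : T -> nat) (f : {set {set T}} -> R),
  simple_graph E ->
  normalized f -> nonnegative E f -> monotone E f -> submodular E f ->
  local_dependence E f ->
  let m := #|E| in
  let beta := \max_(v : T) b v in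
  (1 <= beta)%N -> (2 <= m)%N ->
  forall ss : seq (state T R),
    run E b f (init_state E f) ss ->
    (run_cost (init_state E f) ss <= C * beta * m * trunc_log 2 m)%N.
Proof.
exists 20 => T R E b f simple _ _ _ _ local m beta beta_ge1 m_ge2 ss rn.
have b_le_beta v : (b v <= beta)%N by exact: (leq_bigmax (F := b) v).
have init_size : (size (init_state E f).2 <= m)%N by rewrite /= size_map -cardE.
have inv := init_invariant E b f.
have cost := run_cost_le simple local b_le_beta inv init_size rn.
have steps := leq_trans (run_length_le simple local b_le_beta inv rn)
  (init_potential_le E f beta).
have log_ge1 : (1 <= trunc_log 2 m)%N.
  by rewrite -(trunc_lognn (p := 2)) // leq_trunc_log.
have beta4 : (2 * beta + 2 <= 4 * beta)%N by lia.
rewrite /m in cost log_ge1 *; set L := trunc_log 2 #|E| in cost log_ge1 *.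
apply: leq_trans cost (leq_trans (leq_mul steps (_ : 3 + 2 * L <= 5 * L)%N) _).
  by lia.
apply: leq_trans (leq_mul (leq_mul (leqnn #|E|) beta4) (leqnn _)) _.
by lia.
Qed.
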